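(* Let $(X,A,Y)$ be jointly distributed random variables with $A,Y\in\{0,1\}$. Consider all (possibly randomized) representations $Z=g(X)$, i.e. $Z=g(X,S)$ for a measurable map $g$ and an auxiliary random variable $S$ independent of $(X,A,Y)$. Then the set $$\mathcal{R}_{\mathrm{CE}}:=\{(I(Y;Z),\,I(A;Z)) : Z=g(X)\}\subseteq\mathbb{R}^2$$ is convex.
   Context: $I(\cdot;\cdot)$ denotes mutual information. *)

From HB Require Import structures.
From mathcomp Require Import all_boot all_order all_algebra.
From mathcomp Require Import all_classical all_reals all_analysis.
Set Implicit Arguments. Unset Strict Implicit. Unset Printing Implicit Defensive.
Import Order.TTheory GRing.Theory Num.Theory.
Local Open Scope classical_set_scope.
Local Open Scope ring_scope.

Definition fin_meas_partition d (T : measurableType d) (n : nat)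
    (F : 'I_n -> set T) : Prop :=
  [/\ forall i, measurable (F i),
      forall i j, i != j -> F i `&` F j = set0
    & forall t, exists i, F i t].

Definition mi_term (R : realType) (p a b : R) : R :=
  if p == 0 then 0 else p * ln (p / (a * b)).

Definition quantized_mi (R : realType) dO (O : measurableType dO)
    (P : set O -> \bar R) du (TU : measurableType du) dv (TV : measurableType dv)
    (U : O -> TU) (V : O -> TV) n (F : 'I_n -> set TU) m (G : 'I_m -> set TV) : R :=
  \sum_(i < n) \sum_(j < m)
     mi_term (fine (P (U @^-1` F i `&` V @^-1` G j)))
             (fine (P (U @^-1` F i))) (fine (P (V @^-1` G j))).

(* General mutual information (Gelfand--Yaglom--Dobrushin): the supremum of
   the mutual information of finite measurable quantizations of U and V. *)
Definition mutual_info (R : realType) dO (O : measurableType dO)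
    (P : set O -> \bar R) du (TU : measurableType du) dv (TV : measurableType dv)
    (U : O -> TU) (V : O -> TV) : \bar R :=
  ereal_sup [set x | exists n m (F : 'I_n -> set TU) (G : 'I_m -> set TV),
     [/\ fin_meas_partition F, fin_meas_partition G
        & x = (quantized_mi P U V F G)%:E]].

(* The region R_CE: pairs (I(Y;Z), I(A;Z)) over all randomized representations
   Z = g(X,S), with S ~ nu on an arbitrary measurable space TS, independent of
   (X,A,Y): the underlying space is Omega x TS with the product law P (x) nu. *)
Definition region_CE (R : realType) dO (O : measurableType dO)
    (P : probability O R) dX (TX : measurableType dX)
    (X : O -> TX) (A Y : O -> bool) : set (R * R)%type :=
  [set v | exists dS (TS : measurableType dS) (nu : probability TS R)
             dZ (TZ : measurableType dZ) (g : (TX * TS)%type -> TZ),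
     measurable_fun setT g /\
     v = (fine (mutual_info (P \x nu)%E (fun w : (O * TS)%type => Y w.1)
                  (fun w : (O * TS)%type => g (X w.1, w.2))),
          fine (mutual_info (P \x nu)%E (fun w : (O * TS)%type => A w.1)
                  (fun w : (O * TS)%type => g (X w.1, w.2))))].

From HB Require Import structures.
From mathcomp Require Import all_boot all_order all_algebra.
From mathcomp Require Import all_classical all_reals all_analysis.
From mathcomp Require Import ring lra.
Import Order.TTheory GRing.Theory Num.Theory.
Local Open Scope classical_set_scope.
Local Open Scope ring_scope.

(** Time sharing.  Given representations [Z1 = g1(X,S1)] and [Z2 = g2(X,S2)]
   and [0 < t < 1], toss an independent coin [C] with [P(C = true) = t] and
   publish [Z = (C, Z_C)].  Because the coin is independent of [(X,A,Y)] and
   revealed, [I(U;Z) = t I(U;Z1) + (1-t) I(U;Z2)] for [U = Y] and [U = A].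
   For the quantization definition of mutual information this splits in two:
   a quantization of [Z] restricts, on each face of the coin, to
   quantizations of [Z1] and [Z2], and the log-sum inequality bounds it by the
   mixture of theirs; conversely quantizations of [Z1] and [Z2] glue into one
   of [Z] that attains the mixture.  All these quantities are finite because
   [U] is binary: [I(U;Z) <= - ln P(U = true) - ln P(U = false)]. *)

Section klterm.
Context {R : realType}.
Implicit Types p q k t x : R.

Definition klterm p q : R := if p == 0 then 0 else p * ln (p / q).

Lemma mi_termE p a c : mi_term p a c = klterm p (a * c).
Proof. by []. Qed.

Lemma klterm0 q : klterm 0 q = 0.
Proof. by rewrite /klterm eqxx. Qed.

Lemma klterm_id p : klterm p p = 0.
Proof. by rewrite /klterm; case: eqP => // /eqP p0; rewrite mulfV // ln1 mulr0. Qed.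

Lemma klterm_scale k p q : 0 < k -> klterm (k * p) (k * q) = k * klterm p q.
Proof.
move=> k0; rewrite /klterm mulf_eq0 (gt_eqF k0) /=.
case: eqP => _; first by rewrite mulr0.
by rewrite invfM mulrACA mulfV ?gt_eqF // mul1r mulrA.
Qed.

Lemma klterm_le p q1 q2 : 0 <= p -> (0 < p -> 0 < q1) -> q1 <= q2 ->
  klterm p q2 <= klterm p q1.
Proof.
move=> p0 q1_gt0 q12; rewrite /klterm; case: eqP => // /eqP pn0.
have pp : 0 < p by rewrite lt_def pn0.
have q1p := q1_gt0 pp; have q2p : 0 < q2 by apply: lt_le_trans q12.
rewrite ler_wpM2l // ler_ln ?posrE ?divr_gt0 //.
by rewrite ler_pM2l // lef_pV2 ?posrE.
Qed.

Lemma ln_le_subr1 x : 0 < x -> ln x <= x - 1.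
Proof.
move=> x0; have := @le_ln1Dx R (x - 1).
by rewrite addrCA subrr addr0; apply; lra.
Qed.

Lemma klterm_subadd p1 p2 q1 q2 : 0 <= p1 -> 0 <= p2 -> 0 <= q1 -> 0 <= q2 ->
  (0 < p1 -> 0 < q1) -> (0 < p2 -> 0 < q2) ->
  klterm (p1 + p2) (q1 + q2) <= klterm p1 q1 + klterm p2 q2.
Proof.
move=> p10 p20 q10 q20 q1p q2p.
have [->|p1n0] := eqVneq p1 0.
  by rewrite add0r klterm0 add0r; apply: klterm_le => //; lra.
have [->|p2n0] := eqVneq p2 0.
  by rewrite addr0 klterm0 addr0; apply: klterm_le => //; lra.
have p1p : 0 < p1 by rewrite lt_def p1n0.
have p2p : 0 < p2 by rewrite lt_def p2n0.
have {q1p q2p}[q1p q2p] := (q1p p1p, q2p p2p).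
set P := p1 + p2; set Q := q1 + q2.
have Pp : 0 < P by rewrite /P; lra.
have Qp : 0 < Q by rewrite /Q; lra.
rewrite /klterm (negbTE p1n0) (negbTE p2n0) (gt_eqF Pp).
(* The gap is [p1 ln r1 + p2 ln r2 <= p1 (r1 - 1) + p2 (r2 - 1) = 0]. *)
set r1 := q1 * P / (p1 * Q); set r2 := q2 * P / (p2 * Q).
have r1p : 0 < r1 by rewrite divr_gt0 // mulr_gt0.
have r2p : 0 < r2 by rewrite divr_gt0 // mulr_gt0.
have -> : p1 / q1 = P / Q / r1.
  by rewrite /r1; field; rewrite !gt_eqF.
have -> : p2 / q2 = P / Q / r2.
  by rewrite /r2; field; rewrite !gt_eqF.
have e : p1 * (r1 - 1) + p2 * (r2 - 1) = 0.
  by rewrite /r1 /r2 /P /Q; field; rewrite p1n0 p2n0 -/Q gt_eqF.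
rewrite !(@ln_div R (P / Q)) ?posrE ?r1p ?r2p ?divr_gt0 //.
have s1 : p1 * ln r1 <= p1 * (r1 - 1) by rewrite ler_wpM2l ?ln_le_subr1 ?ltW.
have s2 : p2 * ln r2 <= p2 * (r2 - 1) by rewrite ler_wpM2l ?ln_le_subr1 ?ltW.
rewrite [P * _]mulrDl !mulrBr; lra.
Qed.

Lemma mi_term_scale t p a c : 0 < t ->
  mi_term (t * p) a (t * c) = t * mi_term p a c.
Proof. by move=> t0; rewrite !mi_termE -klterm_scale // mulrCA. Qed.

Lemma mi_term_convex t p1 p2 a c1 c2 : 0 < t < 1 ->
  0 <= p1 -> p1 <= a -> p1 <= c1 -> 0 <= p2 -> p2 <= a -> p2 <= c2 ->
  mi_term (t * p1 + (1 - t) * p2) a (t * c1 + (1 - t) * c2) <=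
  t * mi_term p1 a c1 + (1 - t) * mi_term p2 a c2.
Proof.
move=> /andP[t0 t1] p10 p1a p1c p20 p2a p2c.
have t1' : 0 < 1 - t by rewrite subr_gt0.
have ac_gt0 p c : p <= a -> p <= c -> 0 < p -> 0 < a * c.
  by move=> pa pc p0; rewrite mulr_gt0 // (lt_le_trans p0).
rewrite !mi_termE.
have -> : a * (t * c1 + (1 - t) * c2) = t * (a * c1) + (1 - t) * (a * c2).
  by ring.
rewrite -(klterm_scale _ _ _ t0) -(klterm_scale _ _ _ t1').
apply: klterm_subadd.
- by rewrite mulr_ge0 // ltW.
- by rewrite mulr_ge0 // ltW.
- by apply/mulr_ge0/mulr_ge0; [exact: ltW|exact: le_trans p1a|exact: le_trans p1c].
- by apply/mulr_ge0/mulr_ge0; [exact: ltW|exact: le_trans p2a|exact: le_trans p2c].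
- by rewrite !(pmulr_rgt0 _ t0); exact: ac_gt0 p1a p1c.
- by rewrite !(pmulr_rgt0 _ t1'); exact: ac_gt0 p2a p2c.
Qed.

Lemma mi_term_le_surprisal p a c : 0 <= p -> p <= a -> p <= c ->
  mi_term p a c <= p * - ln a.
Proof.
move=> p0 pa pc; rewrite mi_termE /klterm.
case: eqP => [->|/eqP pn0]; first by rewrite mul0r.
have pp : 0 < p by rewrite lt_def pn0.
have ap : 0 < a by apply: lt_le_trans pa.
have cp : 0 < c by apply: lt_le_trans pc.
rewrite ler_wpM2l // invfM mulrA mulrAC ln_div ?posrE ?divr_gt0 //.
have : ln (p / c) <= 0 by rewrite ln_le0 // ler_pdivrMr // mul1r.
lra.
Qed.

End klterm.

Lemma measurable_funT_preimage d1 d2 (T1 : measurableType d1)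
    (T2 : measurableType d2) (f : T1 -> T2) (B : set T2) :
  measurable_fun setT f -> measurable B -> measurable (f @^-1` B).
Proof. by move=> mf mB; rewrite -[_ @^-1` _]setTI; exact: mf. Qed.

Lemma fin_meas_partition_preimage d1 d2 (T1 : measurableType d1)
    (T2 : measurableType d2) (f : T1 -> T2) n (G : 'I_n -> set T2) :
  measurable_fun setT f -> fin_meas_partition G ->
  fin_meas_partition (fun j => f @^-1` G j).
Proof.
move=> mf [mG disjG covG]; split.
- by move=> j; exact: measurable_funT_preimage.
- by move=> i j ij; rewrite -preimage_setI disjG // preimage_set0.
- by move=> w; have [j Gj] := covG (f w); exists j.
Qed.

Definition trivial_cells (T : Type) : 'I_1 -> set T := fun=> setT.

Lemma trivial_cells_partition {d} (T : measurableType d) :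
  fin_meas_partition (trivial_cells T).
Proof. by split=> [i|i j|t]; [exact: measurableT|rewrite !ord1 eqxx|exists ord0]. Qed.

Definition bool_cells : 'I_2 -> set bool := fun i => [set (i : nat) == 0%N].

Lemma bool_cells_partition : fin_meas_partition bool_cells.
Proof.
split => //.
- move=> i j ij; apply/seteqP; split => // b [] /= -> /eqP.
  by case: i j ij => -[|[|]] // ? [[|[|]] //].
- by case; [exists ord0 | exists (lift ord0 ord0)].
Qed.

Section fine_probability.
Context {R : realType} {d} {T : measurableType d} {Q : probability T R}.

Lemma fine_probabilityK A : measurable A -> (fine (Q A))%:E = Q A.
Proof. by move=> mA; rewrite fineK // fin_num_measure. Qed.

Lemma fine_probabilityT : fine (Q setT) = 1.
Proof. by rewrite probability_setT. Qed.

Lemma fine_probability_le A B : measurable A -> measurable B -> A `<=` B ->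
  fine (Q A) <= fine (Q B).
Proof.
move=> mA mB AB; rewrite -lee_fin !fine_probabilityK //.
by apply: le_measure; rewrite ?inE.
Qed.

Lemma fine_probabilityIl A B : measurable A -> measurable B ->
  fine (Q (A `&` B)) <= fine (Q A).
Proof. by move=> mA mB; apply: fine_probability_le => //; exact: measurableI. Qed.

Lemma fine_probabilityIr A B : measurable A -> measurable B ->
  fine (Q (A `&` B)) <= fine (Q B).
Proof. by move=> mA mB; apply: fine_probability_le => //; exact: measurableI. Qed.

Lemma fine_probability_le1 A : measurable A -> fine (Q A) <= 1.
Proof. by move=> mA; rewrite -fine_probabilityT; exact: fine_probability_le. Qed.

Lemma fine_probabilityU A B : measurable A -> measurable B -> A `&` B = set0 ->
  fine (Q (A `|` B)) = fine (Q A) + fine (Q B).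
Proof. by move=> mA mB AB; rewrite measureU // fineD // fin_num_measure. Qed.

End fine_probability.

Lemma product_probability_fst d1 d2 (T1 : measurableType d1)
    (T2 : measurableType d2) (R : realType) (P1 : probability T1 R)
    (P2 : probability T2 R) (A : set T1) :
  measurable A -> (P1 \x P2)%E (fst @^-1` A) = P1 A.
Proof.
move=> mA; rewrite -setXT product_measure1E // -[RHS]mule1.
by congr (_ * _)%E; exact: probability_setT.
Qed.

Section binary_quantization.
Context {R : realType} {dW} {W : measurableType dW} (Q : probability W R).
Context {dV} {TV : measurableType dV} {U : W -> bool} {V : W -> TV}.
Hypotheses (mU : measurable_fun setT U) (mV : measurable_fun setT V).

Definition mi_row (S : set bool) {m} (G : 'I_m -> set TV) : R :=
  \sum_(j < m) mi_term (fine (Q (U @^-1` S `&` V @^-1` G j)))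
                       (fine (Q (U @^-1` S))) (fine (Q (V @^-1` G j))).

Lemma quantized_miE n (F : 'I_n -> set bool) m (G : 'I_m -> set TV) :
  quantized_mi Q U V F G = \sum_(i < n) mi_row (F i) G.
Proof. by []. Qed.

Lemma quantized_mi_bool_cells m (G : 'I_m -> set TV) :
  quantized_mi Q U V bool_cells G = mi_row [set true] G + mi_row [set false] G.
Proof. by rewrite quantized_miE !big_ord_recl big_ord0 addr0. Qed.

Let mpreU S : measurable (U @^-1` S).
Proof. exact: measurable_funT_preimage. Qed.

Let mpreV {B} : measurable B -> measurable (V @^-1` B).
Proof. exact: measurable_funT_preimage. Qed.

Lemma mi_row0 m (G : 'I_m -> set TV) : mi_row set0 G = 0.
Proof.
by rewrite /mi_row big1 // => j _; rewrite preimage_set0 set0I measure0 mi_termE klterm0.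
Qed.

Lemma mi_rowT m (G : 'I_m -> set TV) : mi_row setT G = 0.
Proof.
rewrite /mi_row big1 // => j _.
by rewrite preimage_setT setTI fine_probabilityT mi_termE mul1r klterm_id.
Qed.

Lemma quantized_mi_bool_cells_ge0 m (G : 'I_m -> set TV) :
  (forall j, measurable (G j)) -> 0 <= quantized_mi Q U V bool_cells G.
Proof.
move=> mG; rewrite quantized_mi_bool_cells /mi_row -big_split /=.
apply: sumr_ge0 => j _.
have splitU B : V @^-1` B =
    (U @^-1` [set true] `&` V @^-1` B) `|` (U @^-1` [set false] `&` V @^-1` B).
  apply/seteqP; split => w /=; last by case=> -[].
  by move=> Bw; case: (U w) (erefl (U w)) => Uw; [left | right].
have disjU B B' :
    (U @^-1` [set true] `&` V @^-1` B) `&` (U @^-1` [set false] `&` V @^-1` B') = set0.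
  by apply/seteqP; split => w //= [[-> _] []].
have mUVG b : measurable (U @^-1` [set b] `&` V @^-1` G j).
  by apply: measurableI; [exact: mpreU | exact: mpreV].
have cell_le b :
    fine (Q (U @^-1` [set b] `&` V @^-1` G j)) <= fine (Q (U @^-1` [set b])) /\
    fine (Q (U @^-1` [set b] `&` V @^-1` G j)) <= fine (Q (V @^-1` G j)).
  split; [exact: fine_probabilityIl (mpreU _) (mpreV (mG j))
         | exact: fine_probabilityIr (mpreU _) (mpreV (mG j))].
have [[pTa pTc] [pFa pFc]] := (cell_le true, cell_le false).
set pT := fine (Q (_ `&` _)) in pTa pTc *; set pF := fine (Q (_ `&` _)) in pFa pFc *.
set aT := fine (Q (U @^-1` _)) in pTa *; set aF := fine (Q (U @^-1` _)) in pFa *.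
set c := fine (Q (V @^-1` G j)) in pTc pFc *.
have [pT0 pF0] : 0 <= pT /\ 0 <= pF by split; exact/fine_ge0/measure_ge0.
have pTF : pT + pF = c.
  by rewrite /c (splitU (G j)) fine_probabilityU ?disjU.
have aTF : aT + aF = 1.
  have := disjU setT setT; rewrite !preimage_setT !setIT => disjUT.
  rewrite -(fine_probabilityT (Q := Q)).
  by have := splitU setT; rewrite !preimage_setT !setIT => ->; rewrite fine_probabilityU.
(* Log-sum over the two values of [U]; its left side is [klterm c c = 0]. *)
have := @klterm_subadd R pT pF (aT * c) (aF * c).
rewrite pTF -mulrDl aTF mul1r klterm_id !mi_termE; apply => //.
- by rewrite mulr_ge0 // (le_trans pT0).
- by rewrite mulr_ge0 // (le_trans pF0).
- by move=> pT_gt0; rewrite mulr_gt0 // (lt_le_trans pT_gt0).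
- by move=> pF_gt0; rewrite mulr_gt0 // (lt_le_trans pF_gt0).
Qed.

Lemma quantized_mi_le_bool_cells n (F : 'I_n -> set bool) m
    (G : 'I_m -> set TV) :
  fin_meas_partition F -> (forall j, measurable (G j)) ->
  quantized_mi Q U V F G <= quantized_mi Q U V bool_cells G.
Proof.
case=> _ disjF covF mG.
have [iT FiT] := covF true; have [iF FiF] := covF false.
have uniqF i j b : i != j -> F i b -> F j b -> False.
  by move=> ij Fib Fjb; have := disjF i j ij; move/seteqP => [/(_ b (conj Fib Fjb))].
have others i : i != iT -> i != iF -> F i = set0.
  move=> iiT iiF; apply/seteqP; split => // -[] Fib.
  - exact: (uniqF i iT true).
  - exact: (uniqF i iF false).
rewrite quantized_miE quantized_mi_bool_cells (bigD1 iT) //=.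
have [eTF|nTF] := eqVneq iT iF.
  have -> : F iT = setT by apply/seteqP; split => // -[] _ //; rewrite eTF.
  rewrite mi_rowT add0r big1 -?quantized_mi_bool_cells.
    exact: quantized_mi_bool_cells_ge0.
  by move=> i iiT; rewrite others ?mi_row0 // -eTF.
rewrite (bigD1 iF) /=; last by rewrite eq_sym nTF.
rewrite big1 ?addr0; last by move=> i /andP[iiT iiF]; rewrite others ?mi_row0.
have -> : F iT = [set true].
  apply/seteqP; split => [[]|b ->] // FiT'; exfalso.
  exact: (uniqF iT iF false nTF FiT' FiF).
have -> : F iF = [set false].
  apply/seteqP; split => [[]|b ->] // FiF'; exfalso.
  exact: (uniqF iT iF true nTF FiT FiF').
by [].
Qed.

Lemma mi_row_le m (S : set bool) (G : 'I_m -> set TV) :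
  fin_meas_partition G -> mi_row S G <= - ln (fine (Q (U @^-1` S))).
Proof.
case=> mG disjG _; set a := fine (Q (U @^-1` S)).
have mUVG j : measurable (U @^-1` S `&` V @^-1` G j).
  by apply: measurableI; [exact: mpreU | exact: mpreV].
apply: (@le_trans _ _ (\sum_(j < m) fine (Q (U @^-1` S `&` V @^-1` G j)) * - ln a)).
  apply: ler_sum => j _; apply: mi_term_le_surprisal.
  - exact/fine_ge0/measure_ge0.
  - exact: fine_probability_le (mUVG j) (mpreU _) (@subIsetl _ _ _).
  - exact: fine_probability_le (mUVG j) (mpreV (mG j)) (@subIsetr _ _ _).
rewrite -mulr_suml -[leRHS]mul1r ler_wpM2r //.
  by rewrite oppr_ge0 ln_le0 // fine_probability_le1.
rewrite -lee_fin -sumEFin.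
under eq_bigr do rewrite fine_probabilityK //.
rewrite -measure_semi_additive_ord //; last first.
- exact: bigsetU_measurable.
- move=> i j _ _ [w [[_ Gi] [_ Gj]]]; apply/eqP; apply: contraT => ij.
  by have := disjG i j ij; move/seteqP => [/(_ (V w) (conj Gi Gj))].
by apply: probability_le1; exact: bigsetU_measurable.
Qed.

Lemma quantized_mi_le_mutual_info {n m} {F : 'I_n -> set bool}
    {G : 'I_m -> set TV} :
  fin_meas_partition F -> fin_meas_partition G ->
  ((quantized_mi Q U V F G)%:E <= mutual_info Q U V)%E.
Proof. by move=> partF partG; apply: ereal_sup_ubound; exists n, m, F, G. Qed.

Lemma mutual_info_le_bool_cells (x : \bar R) :
  (forall m (G : 'I_m -> set TV), fin_meas_partition G ->
     ((quantized_mi Q U V bool_cells G)%:E <= x)%E) ->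
  (mutual_info Q U V <= x)%E.
Proof.
move=> le_x; apply: ge_ereal_sup => _ [n [m [F [G [partF partG ->]]]]].
apply: le_trans (le_x _ _ partG); rewrite lee_fin.
by apply: quantized_mi_le_bool_cells => //; case: partG.
Qed.

Lemma mutual_info_fin_num : mutual_info Q U V \is a fin_num.
Proof.
rewrite fin_numElt; apply/andP; split.
  apply: lt_le_trans _ (quantized_mi_le_mutual_info bool_cells_partition
    (trivial_cells_partition TV)); exact: ltNyr.
apply: le_lt_trans _ (ltry (- ln (fine (Q (U @^-1` [set true]))) +
                           - ln (fine (Q (U @^-1` [set false]))))).
apply: mutual_info_le_bool_cells => m G partG.
by rewrite lee_fin quantized_mi_bool_cells; apply: lerD; exact: mi_row_le.
Qed.

Lemma quantized_mi_le_fine {n m} {F : 'I_n -> set bool} {G : 'I_m -> set TV} :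
  fin_meas_partition F -> fin_meas_partition G ->
  quantized_mi Q U V F G <= fine (mutual_info Q U V).
Proof.
move=> partF partG; rewrite -lee_fin fineK ?mutual_info_fin_num //.
exact: quantized_mi_le_mutual_info.
Qed.

Lemma fine_mutual_info_le (x : R) :
  (forall m (G : 'I_m -> set TV), fin_meas_partition G ->
     quantized_mi Q U V bool_cells G <= x) ->
  fine (mutual_info Q U V) <= x.
Proof.
move=> le_x; rewrite -lee_fin fineK ?mutual_info_fin_num //.
by apply: mutual_info_le_bool_cells => m G partG; rewrite lee_fin le_x.
Qed.

End binary_quantization.

Section switch.
Context {dA} {A : measurableType dA}.
Context {dS1} {S1 : measurableType dS1} {dS2} {S2 : measurableType dS2}.
Context {dZ1} {Z1 : measurableType dZ1} {dZ2} {Z2 : measurableType dZ2}.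

Definition switch (f1 : A * S1 -> Z1) (f2 : A * S2 -> Z2)
    (w : A * (bool * (S1 * S2))) : bool * (Z1 * Z2) :=
  (w.2.1, (if w.2.1 then f1 (w.1, w.2.2.1) else point,
           if w.2.1 then point else f2 (w.1, w.2.2.2))).

Lemma measurable_switch f1 f2 :
  measurable_fun setT f1 -> measurable_fun setT f2 ->
  measurable_fun setT (switch f1 f2).
Proof.
move=> mf1 mf2.
have mcoin : measurable_fun setT (fun w : A * (bool * (S1 * S2)) => w.2.1).
  exact: measurableT_comp measurable_fst measurable_snd.
apply: measurable_fun_pair => //; apply: measurable_fun_pair;
  apply: measurable_fun_ifT => //.
- apply: measurableT_comp mf1 _; apply: measurable_fun_pair => //.
  apply: measurableT_comp measurable_fst _.
  exact: measurableT_comp measurable_snd measurable_snd.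
- apply: measurableT_comp mf2 _; apply: measurable_fun_pair => //.
  apply: measurableT_comp measurable_snd _.
  exact: measurableT_comp measurable_snd measurable_snd.
Qed.

Definition slice_true (B : set (bool * (Z1 * Z2))) : set Z1 :=
  (fun z => (true, (z, point))) @^-1` B.

Definition slice_false (B : set (bool * (Z1 * Z2))) : set Z2 :=
  (fun z => (false, (point, z))) @^-1` B.

Lemma measurable_slice_true B : measurable B -> measurable (slice_true B).
Proof. by apply: measurable_funT_preimage; apply: measurable_fun_pair. Qed.

Lemma measurable_slice_false B : measurable B -> measurable (slice_false B).
Proof. by apply: measurable_funT_preimage; apply: measurable_fun_pair. Qed.

Lemma slice_true_partition m (G : 'I_m -> set (bool * (Z1 * Z2))) :
  fin_meas_partition G -> fin_meas_partition (fun j => slice_true (G j)).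
Proof. by apply: fin_meas_partition_preimage; apply: measurable_fun_pair. Qed.

Lemma slice_false_partition m (G : 'I_m -> set (bool * (Z1 * Z2))) :
  fin_meas_partition G -> fin_meas_partition (fun j => slice_false (G j)).
Proof. by apply: fin_meas_partition_preimage; apply: measurable_fun_pair. Qed.

Definition glue_cells {m1 m2} (G1 : 'I_m1 -> set Z1) (G2 : 'I_m2 -> set Z2) :
    'I_(m1 + m2) -> set (bool * (Z1 * Z2)) :=
  fun k => match fintype.split k with
    | inl j => fst @^-1` [set true] `&` (fun z => z.2.1) @^-1` G1 j
    | inr j => fst @^-1` [set false] `&` (fun z => z.2.2) @^-1` G2 j
    end.

Section glue_cells.
Context {m1 m2 : nat} {G1 : 'I_m1 -> set Z1} {G2 : 'I_m2 -> set Z2}.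

Let glue_lshift j : glue_cells G1 G2 (lshift m2 j) =
  fst @^-1` [set true] `&` (fun z => z.2.1) @^-1` G1 j.
Proof. by rewrite /glue_cells (unsplitK (inl j : 'I_m1 + 'I_m2)). Qed.

Let glue_rshift j : glue_cells G1 G2 (rshift m1 j) =
  fst @^-1` [set false] `&` (fun z => z.2.2) @^-1` G2 j.
Proof. by rewrite /glue_cells (unsplitK (inr j : 'I_m1 + 'I_m2)). Qed.

Lemma slice_true_glue_lshift j : slice_true (glue_cells G1 G2 (lshift m2 j)) = G1 j.
Proof. by rewrite glue_lshift; apply/seteqP; split => z /= => [[]|]. Qed.

Lemma slice_false_glue_lshift j : slice_false (glue_cells G1 G2 (lshift m2 j)) = set0.
Proof. by rewrite glue_lshift; apply/seteqP; split => z //= [] . Qed.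

Lemma slice_true_glue_rshift j : slice_true (glue_cells G1 G2 (rshift m1 j)) = set0.
Proof. by rewrite glue_rshift; apply/seteqP; split => z //= []. Qed.

Lemma slice_false_glue_rshift j : slice_false (glue_cells G1 G2 (rshift m1 j)) = G2 j.
Proof. by rewrite glue_rshift; apply/seteqP; split => z /= => [[]|]. Qed.

Lemma glue_cells_partition : fin_meas_partition G1 -> fin_meas_partition G2 ->
  fin_meas_partition (glue_cells G1 G2).
Proof.
case=> mG1 disjG1 covG1 [mG2 disjG2 covG2]; split.
- move=> k; rewrite /glue_cells; case: (fintype.split k) => j; apply: measurableI;
    apply: measurable_funT_preimage => //.
  + exact: measurableT_comp measurable_fst measurable_snd.
  + exact: measurableT_comp measurable_snd measurable_snd.
- move=> k l kl; rewrite /glue_cells.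
  have : fintype.split k != fintype.split l.
    by apply: contra kl => /eqP kl'; rewrite -(fintype.splitK k) -(fintype.splitK l) kl'.
  case: (fintype.split k) => i; case: (fintype.split l) => j //= ij;
    apply/seteqP; split => // z [[z1 Gi] [z1' Gj]].
  + by have := disjG1 i j ij; move/seteqP => [/(_ _ (conj Gi Gj))].
  + by move: z1 z1' => /= ->.
  + by move: z1 z1' => /= ->.
  + by have := disjG2 i j ij; move/seteqP => [/(_ _ (conj Gi Gj))].
- move=> [[] [z1 z2]].
  + by have [j G1j] := covG1 z1; exists (lshift m2 j); rewrite glue_lshift.
  + by have [j G2j] := covG2 z2; exists (rshift m1 j); rewrite glue_rshift.
Qed.

End glue_cells.

End switch.

Section coin_mixture.
Context {R : realType} {dO} {O : measurableType dO} (P : probability O R).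
Context {dS1} {S1 : measurableType dS1} (nu1 : probability S1 R).
Context {dS2} {S2 : measurableType dS2} (nu2 : probability S2 R).
Context {dZ1} {Z1 : measurableType dZ1} {V1 : O * S1 -> Z1}.
Context {dZ2} {Z2 : measurableType dZ2} {V2 : O * S2 -> Z2}.
Hypotheses (mV1 : measurable_fun setT V1) (mV2 : measurable_fun setT V2).
Context {t : R}.
Hypothesis t01 : 0 < t < 1.

Local Notation noise := (bernoulli_prob t \x (nu1 \x nu2))%E.
Local Notation V := (switch V1 V2).

Let measurable_face_true {H : set (O * (bool * (Z1 * Z2)))} : measurable H ->
  measurable [set w : O * S1 | H (w.1, (true, (V1 w, point)))].
Proof.
move=> mH; apply: measurable_funT_preimage mH; apply: measurable_fun_pair => //.
by apply: measurable_fun_pair => //; apply: measurable_fun_pair.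
Qed.

Let measurable_face_false {H : set (O * (bool * (Z1 * Z2)))} : measurable H ->
  measurable [set w : O * S2 | H (w.1, (false, (point, V2 w)))].
Proof.
move=> mH; apply: measurable_funT_preimage mH; apply: measurable_fun_pair => //.
by apply: measurable_fun_pair => //; apply: measurable_fun_pair.
Qed.

Let t_gt0 : 0 < t. Proof. by case/andP: t01. Qed.
Let onem_t_gt0 : 0 < 1 - t. Proof. by rewrite subr_gt0; case/andP: t01. Qed.
Let t_ge0 : 0 <= t. Proof. exact: ltW. Qed.
Let onem_t_ge0 : 0 <= 1 - t. Proof. exact: ltW. Qed.

Lemma noise_xsection_switch (H : set (O * (bool * (Z1 * Z2)))) o :
  measurable H ->
  noise (xsection [set w | H (w.1, V w)] o) =
  (t%:E * nu1 (xsection [set w | H (w.1, (true, (V1 w, point)))] o) +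
   (1 - t)%:E * nu2 (xsection [set w | H (w.1, (false, (point, V2 w)))] o))%E.
Proof.
move=> mH; set E := [set w | H (w.1, V w)].
set E1 := [set w | H (w.1, (true, (V1 w, point)))].
set E2 := [set w | H (w.1, (false, (point, V2 w)))].
have mE1 : measurable E1 := measurable_face_true mH.
have mE2 : measurable E2 := measurable_face_false mH.
rewrite -[LHS]/(\int[bernoulli_prob t]_b (nu1 \x nu2)%E (xsection (xsection E o) b))%E.
rewrite integral_bernoulli_prob //; last by rewrite t_ge0 -subr_ge0 onem_t_ge0.
have -> : xsection (xsection E o) true = xsection E1 o `*` setT.
  apply/seteqP; split => -[s1 s2]; rewrite /xsection /= !inE /=.
  - by move=> /set_mem E1s.
  - by case=> E1s _; apply: mem_set.
have -> : xsection (xsection E o) false = setT `*` xsection E2 o.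
  apply/seteqP; split => -[s1 s2]; rewrite /xsection /= !inE /=.
  - by move=> /set_mem E2s.
  - by case=> _ E2s; apply: mem_set.
rewrite !product_measure1E //; try exact: measurable_xsection.
congr (_ * _ + _ * _)%E; [rewrite -[RHS]mule1 | rewrite -[RHS]mul1e];
  by congr (_ * _)%E; exact: probability_setT.
Qed.

Lemma product_switchE (H : set (O * (bool * (Z1 * Z2)))) : measurable H ->
  (P \x noise)%E [set w | H (w.1, V w)] =
  (t%:E * (P \x nu1)%E [set w | H (w.1, (true, (V1 w, point)))] +
   (1 - t)%:E * (P \x nu2)%E [set w | H (w.1, (false, (point, V2 w)))])%E.
Proof.
move=> mH; set E1 := [set w | H (w.1, (true, (V1 w, point)))].
set E2 := [set w | H (w.1, (false, (point, V2 w)))].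
have mE1 : measurable E1 := measurable_face_true mH.
have mE2 : measurable E2 := measurable_face_false mH.
rewrite -[LHS]/(\int[P]_o noise (xsection [set w | H (w.1, V w)] o))%E.
rewrite -[(P \x nu1)%E E1]/(\int[P]_o nu1 (xsection E1 o))%E.
rewrite -[(P \x nu2)%E E2]/(\int[P]_o nu2 (xsection E2 o))%E.
rewrite -!ge0_integralZl_EFin //; try exact: measurable_fun_xsection.
rewrite -ge0_integralD //; first last.
- by apply: measurable_funeM; exact: measurable_fun_xsection.
- by move=> x _; rewrite mule_ge0.
- by apply: measurable_funeM; exact: measurable_fun_xsection.
- by move=> x _; rewrite mule_ge0.
by apply: eq_integral => o _; exact: noise_xsection_switch.
Qed.

Context {U : O -> bool}.
Hypothesis mU : measurable_fun setT U.

Let mU_fst {dT} {T : measurableType dT} : measurable_fun setT (U \o @fst O T).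
Proof. exact: measurableT_comp mU measurable_fst. Qed.

Let mV : measurable_fun setT V.
Proof. exact: measurable_switch. Qed.

Lemma switch_cell_prob (S : set bool) (B : set (bool * (Z1 * Z2))) :
  measurable B ->
  fine ((P \x noise)%E ((U \o fst) @^-1` S `&` V @^-1` B)) =
  t * fine ((P \x nu1)%E ((U \o fst) @^-1` S `&` V1 @^-1` slice_true B)) +
  (1 - t) * fine ((P \x nu2)%E ((U \o fst) @^-1` S `&` V2 @^-1` slice_false B)).
Proof.
move=> mB; have mS : measurable (U @^-1` S) by exact: measurable_funT_preimage.
apply: EFin_inj; rewrite EFinD !EFinM !fine_probabilityK.
- exact: (product_switchE _ (measurableX mS mB)).
- apply: measurableI; apply: measurable_funT_preimage => //.
  + exact: mU_fst.
  + exact: measurable_slice_false.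
- apply: measurableI; apply: measurable_funT_preimage => //.
  + exact: mU_fst.
  + exact: measurable_slice_true.
- by apply: measurableI; apply: measurable_funT_preimage => //; exact: mU_fst.
Qed.

Lemma switch_prob (B : set (bool * (Z1 * Z2))) : measurable B ->
  fine ((P \x noise)%E (V @^-1` B)) =
  t * fine ((P \x nu1)%E (V1 @^-1` slice_true B)) +
  (1 - t) * fine ((P \x nu2)%E (V2 @^-1` slice_false B)).
Proof.
by move=> mB; have := switch_cell_prob setT _ mB; rewrite !preimage_setT !setTI.
Qed.

Let fine_prob_U_fst {dT} {T : measurableType dT} (nu : probability T R) S :
  fine ((P \x nu)%E ((U \o fst) @^-1` S)) = fine (P (U @^-1` S)).
Proof.
rewrite -[(U \o fst) @^-1` S]/(fst @^-1` (U @^-1` S)) product_probability_fst //.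
exact: measurable_funT_preimage.
Qed.

Let mUS {dT} {T : measurableType dT} S : measurable ((U \o @fst O T) @^-1` S).
Proof. by apply: measurable_funT_preimage => //; exact: mU_fst. Qed.

Lemma quantized_mi_switch_le {n} (F : 'I_n -> set bool) {m}
    (G : 'I_m -> set (bool * (Z1 * Z2))) :
  (forall j, measurable (G j)) ->
  quantized_mi (P \x noise)%E (U \o fst) V F G <=
  t * quantized_mi (P \x nu1)%E (U \o fst) V1 F (fun j => slice_true (G j)) +
  (1 - t) * quantized_mi (P \x nu2)%E (U \o fst) V2 F (fun j => slice_false (G j)).
Proof.
move=> mG; rewrite /quantized_mi !mulr_sumr -big_split; apply: ler_sum => i _.
rewrite !mulr_sumr -big_split; apply: ler_sum => j _ /=.
have mV1G : measurable (V1 @^-1` slice_true (G j)).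
  exact/measurable_funT_preimage/measurable_slice_true.
have mV2G : measurable (V2 @^-1` slice_false (G j)).
  exact/measurable_funT_preimage/measurable_slice_false.
rewrite [X in mi_term X _ _ <= _]switch_cell_prob //.
rewrite [X in mi_term _ _ X <= _]switch_prob //.
rewrite [X in mi_term _ X _ <= _]fine_prob_U_fst.
rewrite (fine_prob_U_fst nu1 (F i)) (fine_prob_U_fst nu2 (F i)).
apply: mi_term_convex => //.
- exact/fine_ge0/measure_ge0.
- by rewrite -(fine_prob_U_fst nu1 (F i)); exact: fine_probabilityIl (mUS _) mV1G.
- exact: fine_probabilityIr (mUS _) mV1G.
- exact/fine_ge0/measure_ge0.
- by rewrite -(fine_prob_U_fst nu2 (F i)); exact: fine_probabilityIl (mUS _) mV2G.
- exact: fine_probabilityIr (mUS _) mV2G.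
Qed.

Lemma quantized_mi_switch_glue {n} (F : 'I_n -> set bool) {m1 m2}
    (G1 : 'I_m1 -> set Z1) (G2 : 'I_m2 -> set Z2) :
  fin_meas_partition G1 -> fin_meas_partition G2 ->
  quantized_mi (P \x noise)%E (U \o fst) V F (glue_cells G1 G2) =
  t * quantized_mi (P \x nu1)%E (U \o fst) V1 F G1 +
  (1 - t) * quantized_mi (P \x nu2)%E (U \o fst) V2 F G2.
Proof.
move=> partG1 partG2; have [mG _ _] := glue_cells_partition partG1 partG2.
rewrite /quantized_mi !mulr_sumr -big_split; apply: eq_bigr => i _ /=.
rewrite big_split_ord /= !mulr_sumr; congr (_ + _); apply: eq_bigr => j _.
- rewrite [X in mi_term X _ _]switch_cell_prob // [X in mi_term _ _ X]switch_prob //.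
  rewrite [X in mi_term _ X _]fine_prob_U_fst (fine_prob_U_fst nu1 (F i)).
  rewrite slice_true_glue_lshift slice_false_glue_lshift preimage_set0 setI0.
  by rewrite measure0 /= !mulr0 !addr0 mi_term_scale.
- rewrite [X in mi_term X _ _]switch_cell_prob // [X in mi_term _ _ X]switch_prob //.
  rewrite [X in mi_term _ X _]fine_prob_U_fst (fine_prob_U_fst nu2 (F i)).
  rewrite slice_true_glue_rshift slice_false_glue_rshift preimage_set0 setI0.
  by rewrite measure0 /= !mulr0 !add0r mi_term_scale.
Qed.

Lemma mutual_info_switch :
  fine (mutual_info (P \x noise)%E (U \o fst) V) =
  t * fine (mutual_info (P \x nu1)%E (U \o fst) V1) +
  (1 - t) * fine (mutual_info (P \x nu2)%E (U \o fst) V2).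
Proof.
apply/le_anti/andP; split.
  apply: (fine_mutual_info_le _ mU_fst mV) => m G partG.
  have [mG _ _] := partG.
  apply: le_trans (quantized_mi_switch_le bool_cells G mG) _.
  apply: lerD; rewrite ler_pM2l //.
  - apply: (quantized_mi_le_fine _ mU_fst).
    + exact: mV1.
    + exact: bool_cells_partition.
    + exact: slice_true_partition.
  - apply: (quantized_mi_le_fine _ mU_fst).
    + exact: mV2.
    + exact: bool_cells_partition.
    + exact: slice_false_partition.
(* Bound [I1] by [(M - (1 - t) I2) / t] through its quantizations, then [I2]. *)
rewrite -lerBrDr -ler_pdivlMl //.
apply: (fine_mutual_info_le _ mU_fst mV1) => m1 G1 partG1.
rewrite ler_pdivlMl // lerBrDr addrC -lerBrDr -ler_pdivlMl //.
apply: (fine_mutual_info_le _ mU_fst mV2) => m2 G2 partG2.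
rewrite ler_pdivlMl // lerBrDr addrC -quantized_mi_switch_glue //.
exact: (quantized_mi_le_fine _ mU_fst mV bool_cells_partition
  (glue_cells_partition partG1 partG2)).
Qed.

End coin_mixture.

Lemma measurable_repr {d dX dS dZ} {O : measurableType d} {TX : measurableType dX}
    {TS : measurableType dS} {TZ : measurableType dZ} {X : O -> TX}
    {g : TX * TS -> TZ} :
  measurable_fun setT X -> measurable_fun setT g ->
  measurable_fun setT (fun w : O * TS => g (X w.1, w.2)).
Proof.
move=> mX mg; apply: measurableT_comp mg _; apply: measurable_fun_pair => //.
exact: measurableT_comp mX measurable_fst.
Qed.

Theorem proposition1 (R : realType) (dO : measure_display) (O : measurableType dO)
    (P : probability O R) (dX : measure_display) (TX : measurableType dX)
    (X : O -> TX) (A Y : O -> bool)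
    (mX : measurable_fun setT X) (mA : measurable_fun setT A)
    (mY : measurable_fun setT Y) :
  convex_set (region_CE P X A Y : set (convex_lmodType (R * R)%type)).
Proof.
apply/convex_setW => x y /set_mem[dS1 [S1 [nu1 [dZ1 [Z1 [g1 [mg1 ->]]]]]]].
move=> /set_mem[dS2 [S2 [nu2 [dZ2 [Z2 [g2 [mg2 ->]]]]]]] k k0 k1.
have k01 : 0 < k%:num < 1 by rewrite k0 k1.
have mV1 := measurable_repr mX mg1; have mV2 := measurable_repr mX mg2.
apply: mem_set; exists _, _, (bernoulli_prob k%:num \x (nu1 \x nu2))%E, _, _,
  (switch g1 g2).
split; first exact: measurable_switch.
apply/pair_equal_spec; split; apply/esym.
- exact: (mutual_info_switch P nu1 nu2 mV1 mV2 k01 mY).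
- exact: (mutual_info_switch P nu1 nu2 mV1 mV2 k01 mA).
Qed.
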